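(* Let $\mathbb{X}$ be a finite dimensional real Banach space and $T,A\in\mathbb{B}(\mathbb{X})$. Then $T\perp_B A$ if and only if there exist $x,y\in M_T$ such that $Ax\in(Tx)^+$ and $Ay\in(Ty)^-$.
   Context: $\mathbb{B}(\mathbb{X})$ is the space of bounded linear operators on $\mathbb{X}$ with the operator norm. $S_{\mathbb{X}}$ is the unit sphere and $M_T=\{x\in S_{\mathbb{X}}:\|Tx\|=\|T\|\}$. For elements $u,v$ of a normed space, $u\perp_B v$ (Birkhoff–James orthogonality) means $\|u+\lambda v\|\ge\|u\|$ for all $\lambda\in\mathbb{R}$; $v\in u^+$ means $\|u+\lambda v\|\ge\|u\|$ for all $\lambda\ge0$; $v\in u^-$ means $\|u+\lambda v\|\ge\|u\|$ for all $\lambda\le 0$. *)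

From Stdlib Require Import Fin Reals Lra Classical ClassicalEpsilon FunctionalExtensionality.
Open Scope R_scope.

(* A finite dimensional real normed space is (isometrically isomorphic to)
   R^n = (Fin.t n -> R) equipped with some norm N. *)
Definition vec (n : nat) := Fin.t n -> R.

Definition vzero {n} : vec n := fun _ => 0.
Definition vadd {n} (x y : vec n) : vec n := fun i => x i + y i.
Definition vscal {n} (c : R) (x : vec n) : vec n := fun i => c * x i.

Definition is_norm {n} (N : vec n -> R) : Prop :=
  (forall x, 0 <= N x) /\
  (forall x, N x = 0 -> x = vzero) /\
  (forall c x, N (vscal c x) = Rabs c * N x) /\
  (forall x y, N (vadd x y) <= N x + N y).

(* Linear operators on R^n (all bounded since the dimension is finite). *)
Definition is_linear {n} (T : vec n -> vec n) : Prop :=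
  (forall x y, T (vadd x y) = vadd (T x) (T y)) /\
  (forall c x, T (vscal c x) = vscal c (T x)).

Definition op_add {n} (T A : vec n -> vec n) : vec n -> vec n :=
  fun x => vadd (T x) (A x).
Definition op_scal {n} (c : R) (A : vec n -> vec n) : vec n -> vec n :=
  fun x => vscal c (A x).

(* Operator norm: sup { N (T x) | N x = 1 } (chosen by epsilon; the lub exists
   in finite dimension). *)
Definition opnorm_set {n} (N : vec n -> R) (T : vec n -> vec n) (r : R) : Prop :=
  exists x, N x = 1 /\ r = N (T x).

Definition opnorm {n} (N : vec n -> R) (T : vec n -> vec n) : R :=
  epsilon (inhabits 0) (fun c => is_lub (opnorm_set N T) c).

Definition M_set {n} (N : vec n -> R) (T : vec n -> vec n) (x : vec n) : Prop :=
  N x = 1 /\ N (T x) = opnorm N T.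

Definition BJ_orth_op {n} (N : vec n -> R) (T A : vec n -> vec n) : Prop :=
  forall lam : R, opnorm N (op_add T (op_scal lam A)) >= opnorm N T.

Definition in_plus {n} (N : vec n -> R) (u v : vec n) : Prop :=
  forall lam : R, lam >= 0 -> N (vadd u (vscal lam v)) >= N u.
Definition in_minus {n} (N : vec n -> R) (u v : vec n) : Prop :=
  forall lam : R, lam <= 0 -> N (vadd u (vscal lam v)) >= N u.

From Stdlib Require Import Reals Lra Lia Rtopology.
From Stdlib Require Import Classical ClassicalEpsilon FunctionalExtensionality.
Open Scope R_scope.

(* If T is orthogonal to A in the direction lam >= 0, then for lam_k = 1/(k+1)
   there are unit vectors x_k with ||T x_k + lam_k A x_k|| > ||T|| - lam_k^2.
   Since the unit sphere of a finite-dimensional space is compact, a subsequence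
   converges to some x, which lies in M_T.  Moreover T x_k + lam_k A x_k is a
   convex combination of T x_k and T x_k + mu A x_k, which forces
   ||T x_k + mu A x_k|| >= ||T|| - lam_k mu, and in the limit A x is in (T x)^+.
   Applying this to -A gives y with A y in (T y)^-.  The converse holds because
   ||T + lam A|| >= ||(T + lam A) x|| for every x in M_T. *)

Definition eventually (P : nat -> Prop) : Prop :=
  exists K, forall k, (K <= k)%nat -> P k.

Lemma eventually_mono (P Q : nat -> Prop) :
  (forall k, P k -> Q k) -> eventually P -> eventually Q.
Proof. intros HPQ [K HK]. exists K. auto. Qed.

Lemma eventually_and (P Q : nat -> Prop) :
  eventually P -> eventually Q -> eventually (fun k => P k /\ Q k).
Proof.
  intros [K1 H1] [K2 H2]. exists (Nat.max K1 K2).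
  intros k Hk. split; [apply H1 | apply H2]; lia.
Qed.

Lemma eventually_forall_fin (n : nat) (P : Fin.t n -> nat -> Prop) :
  (forall i, eventually (P i)) -> eventually (fun k => forall i, P i k).
Proof.
  revert P; induction n as [|n IH]; intros P HP.
  - exists 0%nat. intros k _ i. exact (Fin.case0 (fun i => P i k) i).
  - apply (eventually_mono (fun k => P Fin.F1 k /\ forall i, P (Fin.FS i) k)).
    + intros k [H1 HS] i. pattern i; apply Fin.caseS'; auto.
    + apply eventually_and; [apply HP | apply IH; intros i; apply HP].
Qed.

Lemma eventually_inv_S_lt (eps : R) : 0 < eps -> eventually (fun k => / INR (S k) < eps).
Proof.
  intros Heps. destruct (archimed_cor1 eps Heps) as [K [HK HK0]].
  exists K. intros k Hk. eapply Rle_lt_trans; [|exact HK].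
  apply Rinv_le_contravar; [apply lt_0_INR; exact HK0 | apply le_INR; lia].
Qed.

Definition strict_incr (phi : nat -> nat) : Prop := forall k, (phi k < phi (S k))%nat.

Lemma strict_incr_ge (phi : nat -> nat) : strict_incr phi -> forall k, (k <= phi k)%nat.
Proof. intros Hphi k. induction k as [|k IH]; [lia|]. specialize (Hphi k). lia. Qed.

Lemma strict_incr_lt (phi : nat -> nat) :
  strict_incr phi -> forall a b, (a < b)%nat -> (phi a < phi b)%nat.
Proof.
  intros Hphi a b Hab. induction Hab as [|b Hab IH]; [apply Hphi|].
  specialize (Hphi b). lia.
Qed.

Lemma strict_incr_comp (phi psi : nat -> nat) :
  strict_incr phi -> strict_incr psi -> strict_incr (fun k => phi (psi k)).
Proof. intros Hphi Hpsi k. apply (strict_incr_lt phi Hphi), Hpsi. Qed.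

Lemma eventually_subseq (P : nat -> Prop) (phi : nat -> nat) :
  strict_incr phi -> eventually P -> eventually (fun k => P (phi k)).
Proof.
  intros Hphi [K HK]. exists K. intros k Hk.
  apply HK. pose proof (strict_incr_ge phi Hphi k). lia.
Qed.

Lemma Un_cv_subseq (u : nat -> R) (l : R) (phi : nat -> nat) :
  strict_incr phi -> Un_cv u l -> Un_cv (fun k => u (phi k)) l.
Proof. intros Hphi Hu eps Heps. exact (eventually_subseq _ phi Hphi (Hu eps Heps)). Qed.

Lemma ValAdh_cv_subseq (u : nat -> R) (l : R) :
  ValAdh u l -> exists phi, strict_incr phi /\ Un_cv (fun k => u (phi k)) l.
Proof.
  intros Hl.
  assert (Hnear : forall Kk : nat * nat,
    exists p, (fst Kk <= p)%nat /\ Rabs (u p - l) < / INR (S (snd Kk))).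
  { intros [K k].
    assert (Hpos : 0 < / INR (S k)) by (apply Rinv_0_lt_compat, lt_0_INR; lia).
    apply (Hl (disc l (mkposreal _ Hpos)) K).
    exists (mkposreal _ Hpos). intros y Hy; exact Hy. }
  destruct (choice _ Hnear) as [g Hg].
  (* the k-th index lies beyond the previous one and within 1/(k+1) of l *)
  set (phi := fix phi k :=
         match k with 0%nat => g (0%nat, 0%nat) | S k' => g (S (phi k'), S k') end).
  assert (Hclose : forall k, Rabs (u (phi k) - l) < / INR (S k)).
  { intros [|k]; [apply (Hg (0%nat, 0%nat)) | apply (Hg (S (phi k), S k))]. }
  exists phi. split.
  - intros k. exact (proj1 (Hg (S (phi k), S k))).
  - intros eps Heps. apply (eventually_mono (fun k => / INR (S k) < eps)).
    + intros k Hk. apply (Rlt_trans _ _ _ (Hclose k) Hk).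
    + apply eventually_inv_S_lt, Heps.
Qed.

Lemma bounded_cv_subseq_R (u : nat -> R) (B : R) :
  (forall k, Rabs (u k) <= B) -> exists phi l, strict_incr phi /\ Un_cv (fun k => u (phi k)) l.
Proof.
  intros HB.
  destruct (Bolzano_Weierstrass u (fun c => -B <= c <= B) (compact_P3 _ _)) as [l Hl].
  { intros k. specialize (HB k). pose proof (Rle_abs (u k)). pose proof (Rle_abs (- u k)).
    rewrite Rabs_Ropp in *. lra. }
  destruct (ValAdh_cv_subseq u l Hl) as [phi Hphi]. exists phi, l. exact Hphi.
Qed.

Definition cv_coord {n} (u : nat -> vec n) (l : vec n) : Prop :=
  forall i, Un_cv (fun k => u k i) (l i).

Lemma bounded_cv_coord_subseq (n : nat) (u : nat -> vec n) (B : R) :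
  (forall k i, Rabs (u k i) <= B) ->
  exists phi l, strict_incr phi /\ cv_coord (fun k => u (phi k)) l.
Proof.
  revert u; induction n as [|n IH]; intros u HB.
  - exists (fun k => k), vzero. split; [intros k; lia|].
    intros i. exact (Fin.case0 (fun i => Un_cv (fun k => u k i) (vzero i)) i).
  - destruct (IH (fun k i => u k (Fin.FS i))) as [phi [l [Hphi Hl]]]; [intros; apply HB|].
    destruct (bounded_cv_subseq_R (fun k => u (phi k) Fin.F1) B) as [psi [l0 [Hpsi Hl0]]];
      [intros; apply HB|].
    exists (fun k => phi (psi k)), (fun i => Fin.caseS' i (fun _ => R) l0 l).
    split; [apply strict_incr_comp; auto|].
    intros i; pattern i; apply Fin.caseS'; simpl.
    + exact Hl0.
    + intros j. apply (Un_cv_subseq (fun k => u (phi k) (Fin.FS j))); auto.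
Qed.

Definition vsub {n} (x y : vec n) : vec n := vadd x (vscal (-1) y).

Ltac vec_ext :=
  apply functional_extensionality; intros;
  unfold vsub, vadd, vscal, vzero; try field; lra.

Definition seminorm {n} (S : vec n -> R) : Prop :=
  (forall c x, S (vscal c x) = Rabs c * S x) /\
  (forall x y, S (vadd x y) <= S x + S y).

Lemma norm_seminorm {n} (N : vec n -> R) : is_norm N -> seminorm N.
Proof. intros (_ & _ & Hscal & Htri). split; assumption. Qed.

Lemma seminorm_comp_linear {n} (S : vec n -> R) (G : vec n -> vec n) :
  seminorm S -> is_linear G -> seminorm (fun x => S (G x)).
Proof.
  intros [Hscal Htri] [Gadd Gscal]. split; intros.
  - rewrite Gscal. apply Hscal.
  - rewrite Gadd. apply Htri.
Qed.

Section Seminorm.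
Variables (n : nat) (S : vec n -> R).
Hypothesis HS : seminorm S.

Lemma seminorm_zero : S vzero = 0.
Proof.
  replace (@vzero n) with (vscal 0 (@vzero n)) by vec_ext.
  rewrite (proj1 HS), Rabs_R0. ring.
Qed.

Lemma seminorm_nonneg (x : vec n) : 0 <= S x.
Proof.
  destruct HS as [Hscal Htri].
  pose proof (Htri x (vscal (-1) x)) as H.
  replace (vadd x (vscal (-1) x)) with (@vzero n) in H by vec_ext.
  rewrite seminorm_zero, Hscal, Rabs_left in H by lra. lra.
Qed.

Lemma seminorm_sub_sym (x y : vec n) : S (vsub x y) = S (vsub y x).
Proof.
  replace (vsub y x) with (vscal (-1) (vsub x y)) by vec_ext.
  rewrite (proj1 HS), Rabs_left by lra. ring.
Qed.

Lemma seminorm_sub_abs (x y : vec n) : Rabs (S x - S y) <= S (vsub x y).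
Proof.
  assert (Hle : forall x y, S x - S y <= S (vsub x y)).
  { intros a b. pose proof (proj2 HS (vsub a b) b) as H.
    replace (vadd (vsub a b) b) with a in H by vec_ext. lra. }
  pose proof (Hle y x) as Hyx. rewrite seminorm_sub_sym in Hyx.
  apply Rabs_le. pose proof (Hle x y). lra.
Qed.

End Seminorm.

Fixpoint vmax (n : nat) : vec n -> R :=
  match n with
  | 0%nat => fun _ => 0
  | S m => fun x => Rmax (Rabs (x Fin.F1)) (vmax m (fun i => x (Fin.FS i)))
  end.

Lemma vmax_ge_coord (n : nat) (x : vec n) (i : Fin.t n) : Rabs (x i) <= vmax n x.
Proof.
  induction i as [m|m i IH]; simpl.
  - apply Rmax_l.
  - eapply Rle_trans; [apply (IH (fun j => x (Fin.FS j))) | apply Rmax_r].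
Qed.

Lemma vmax_nonneg (n : nat) (x : vec n) : 0 <= vmax n x.
Proof.
  destruct n as [|n]; simpl; [lra|].
  eapply Rle_trans; [apply Rabs_pos | apply Rmax_l].
Qed.

Lemma vmax_le (n : nat) (x : vec n) (b : R) :
  0 <= b -> (forall i, Rabs (x i) <= b) -> vmax n x <= b.
Proof.
  revert x; induction n as [|n IH]; intros x Hb Hx; simpl; [lra|].
  apply Rmax_lub; [apply Hx | apply IH; auto].
Qed.

Lemma vmax_seminorm (n : nat) : seminorm (vmax n).
Proof.
  split.
  - induction n as [|n IH]; intros c x; simpl; [ring|].
    unfold vscal at 1. rewrite Rabs_mult, <- RmaxRmult by apply Rabs_pos.
    f_equal. apply (IH c (fun i => x (Fin.FS i))).
  - intros x y. apply vmax_le.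
    + pose proof (vmax_nonneg n x). pose proof (vmax_nonneg n y). lra.
    + intros i. unfold vadd. eapply Rle_trans; [apply Rabs_triang|].
      apply Rplus_le_compat; apply vmax_ge_coord.
Qed.

Definition vshift {n} (y : vec n) : vec (S n) := fun i => Fin.caseS' i (fun _ => R) 0 y.
Definition ebas0 {n} : vec (S n) := fun i => Fin.caseS' i (fun _ => R) 1 (fun _ => 0).

Lemma vec_decomp_head {n} (x : vec (S n)) :
  x = vadd (vscal (x Fin.F1) ebas0) (vshift (fun i => x (Fin.FS i))).
Proof.
  apply functional_extensionality; intros i. pattern i; apply Fin.caseS';
    intros; unfold vadd, vscal, ebas0, vshift; simpl; ring.
Qed.

Lemma seminorm_le_vmax (n : nat) (S : vec n -> R) :
  seminorm S -> exists K, 0 <= K /\ forall x, S x <= K * vmax n x.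
Proof.
  revert S; induction n as [|n IH]; intros S HS.
  - exists 0. split; [lra|]. intros x.
    replace x with (vscal 0 x)
      by (apply functional_extensionality; intros i;
          exact (Fin.case0 (fun i => vscal 0 x i = x i) i)).
    rewrite (proj1 HS), Rabs_R0. simpl. lra.
  - assert (Hshift : seminorm (fun y : vec n => S (vshift y))).
    { split.
      - intros c y. rewrite <- (proj1 HS). f_equal.
        apply functional_extensionality; intros i; pattern i; apply Fin.caseS';
          intros; unfold vscal, vshift; simpl; ring.
      - intros x y. rewrite <- (proj2 HS). apply Req_le. f_equal.
        apply functional_extensionality; intros i; pattern i; apply Fin.caseS';
          intros; unfold vadd, vshift; simpl; ring. }
    destruct (IH _ Hshift) as [K [HK0 HK]].
    exists (S ebas0 + K). split; [pose proof (seminorm_nonneg _ S HS ebas0); lra|].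
    intros x. rewrite (vec_decomp_head x) at 1.
    eapply Rle_trans; [apply (proj2 HS)|]. rewrite (proj1 HS).
    assert (Hhead : Rabs (x Fin.F1) <= vmax _ x) by apply Rmax_l.
    assert (Htail : vmax n (fun i => x (Fin.FS i)) <= vmax _ x) by apply Rmax_r.
    pose proof (HK (fun i => x (Fin.FS i))). pose proof (seminorm_nonneg _ S HS ebas0).
    nra.
Qed.

Lemma Rmult_div_succ_le (K e : R) : 0 <= K -> 0 <= e -> K * (e / (K + 1)) <= e.
Proof.
  intros HK He. apply Rle_trans with ((K + 1) * (e / (K + 1))).
  - apply Rmult_le_compat_r; [|lra].
    apply Rmult_le_pos; [lra | apply Rlt_le, Rinv_0_lt_compat; lra].
  - right. field. lra.
Qed.

Definition cv_in {n} (S : vec n -> R) (u : nat -> vec n) (l : vec n) : Prop :=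
  forall eps, 0 < eps -> eventually (fun k => S (vsub (u k) l) <= eps).

Lemma cv_coord_vmax {n} (u : nat -> vec n) (l : vec n) : cv_coord u l -> cv_in (vmax n) u l.
Proof.
  intros Hu eps Heps.
  apply (eventually_mono (fun k => forall i, Rabs (u k i - l i) < eps)).
  - intros k Hk. apply vmax_le; [lra|]. intros i. unfold vsub, vadd, vscal.
    replace (u k i + -1 * l i) with (u k i - l i) by ring. apply Rlt_le, Hk.
  - apply eventually_forall_fin. intros i. exact (Hu i eps Heps).
Qed.

Lemma cv_in_vmax_seminorm {n} (S : vec n -> R) (u : nat -> vec n) (l : vec n) :
  seminorm S -> cv_in (vmax n) u l -> cv_in S u l.
Proof.
  intros HS Hu eps Heps. destruct (seminorm_le_vmax n S HS) as [K [HK0 HK]].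
  apply (eventually_mono (fun k => vmax n (vsub (u k) l) <= eps / (K + 1))).
  - intros k Hk. eapply Rle_trans; [apply HK|].
    eapply Rle_trans; [apply Rmult_le_compat_l; [exact HK0 | exact Hk]|].
    apply Rmult_div_succ_le; lra.
  - apply Hu, Rdiv_lt_0_compat; lra.
Qed.

Definition lipschitz {n} (S F : vec n -> R) (L : R) : Prop :=
  0 <= L /\ forall x y, Rabs (F x - F y) <= L * S (vsub x y).

Lemma seminorm_lipschitz {n} (S : vec n -> R) : seminorm S -> lipschitz S S 1.
Proof.
  intros HS. split; [lra|]. intros x y. rewrite Rmult_1_l. apply seminorm_sub_abs, HS.
Qed.

Lemma cv_in_limit_ge {n} (S F : vec n -> R) (L c : R) (u : nat -> vec n) (z : vec n) :
  lipschitz S F L -> cv_in S u z ->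
  (forall eps, 0 < eps -> eventually (fun k => c - eps <= F (u k))) -> c <= F z.
Proof.
  intros [HL0 HL] Hu Hc. apply Rle_plus_epsilon. intros eps Heps.
  destruct (eventually_and _ _ (Hc (eps / 2) ltac:(lra))
              (Hu (eps / 2 / (L + 1)) ltac:(apply Rdiv_lt_0_compat; lra))) as [K HK].
  destruct (HK K (le_n K)) as [Hnear_c Hnear_z].
  pose proof (Rmult_div_succ_le L (eps / 2) HL0 ltac:(lra)).
  pose proof (Rmult_le_compat_l L _ _ HL0 Hnear_z).
  pose proof (HL (u K) z). pose proof (Rle_abs (F (u K) - F z)). lra.
Qed.

Lemma cv_in_limit_le {n} (S F : vec n -> R) (L c : R) (u : nat -> vec n) (z : vec n) :
  lipschitz S F L -> cv_in S u z ->
  (forall eps, 0 < eps -> eventually (fun k => F (u k) <= c + eps)) -> F z <= c.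
Proof.
  intros [HL0 HL] Hu Hc.
  assert (Hopp : lipschitz S (fun x => - F x) L).
  { split; [exact HL0|]. intros x y.
    replace (- F x - - F y) with (- (F x - F y)) by ring. rewrite Rabs_Ropp. apply HL. }
  enough (- c <= - F z) by lra.
  apply (cv_in_limit_ge S _ L (- c) u z Hopp Hu).
  intros eps Heps. apply (eventually_mono (fun k => F (u k) <= c + eps));
    [intros k Hk; lra | apply Hc, Heps].
Qed.

Lemma op_scal_linear {n} (c : R) (A : vec n -> vec n) :
  is_linear A -> is_linear (op_scal c A).
Proof.
  intros [Aadd Ascal]. unfold op_scal. split; intros.
  - rewrite Aadd. vec_ext.
  - rewrite Ascal. vec_ext.
Qed.

Lemma op_add_linear {n} (T A : vec n -> vec n) :
  is_linear T -> is_linear A -> is_linear (op_add T A).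
Proof.
  intros [Tadd Tscal] [Aadd Ascal]. unfold op_add. split; intros.
  - rewrite Tadd, Aadd. vec_ext.
  - rewrite Tscal, Ascal. vec_ext.
Qed.

Lemma op_add_scal_linear {n} (T A : vec n -> vec n) (c : R) :
  is_linear T -> is_linear A -> is_linear (op_add T (op_scal c A)).
Proof. intros HT HA. apply op_add_linear, op_scal_linear; assumption. Qed.

Lemma seminorm_convex_bound {n} (S : vec n -> R) (u v : vec n) (t lam mu : R) :
  seminorm S -> 0 < lam <= mu -> S u <= t ->
  t - lam * lam < S (vadd u (vscal lam v)) -> t - lam * mu <= S (vadd u (vscal mu v)).
Proof.
  intros [Hscal Htri] Hlm Hu Hnear.
  set (th := lam / mu).
  assert (Hth : 0 < th <= 1).
  { unfold th. split; [apply Rdiv_lt_0_compat; lra|].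
    apply Rmult_le_reg_r with mu; [lra|]. field_simplify; lra. }
  assert (Hseg : vadd u (vscal lam v) = vadd (vscal (1 - th) u) (vscal th (vadd u (vscal mu v))))
    by (unfold th; vec_ext).
  rewrite Hseg in Hnear.
  pose proof (Htri (vscal (1 - th) u) (vscal th (vadd u (vscal mu v)))) as Hsplit.
  rewrite !Hscal, (Rabs_right (1 - th)), (Rabs_right th) in Hsplit by lra.
  set (f := S (vadd u (vscal mu v))) in *.
  assert (Hf : th * (t - f) < th * (lam * mu)).
  { replace (th * (lam * mu)) with (lam * lam) by (unfold th; field; lra). nra. }
  apply Rmult_lt_reg_l in Hf; lra.
Qed.

Section FiniteDimensionalNorm.
Variables (n : nat) (N : vec n -> R).
Hypothesis HN : is_norm N.

Let HNs : seminorm N := norm_seminorm N HN.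

Lemma cv_coord_norm (u : nat -> vec n) (l : vec n) : cv_coord u l -> cv_in N u l.
Proof. intros Hu. apply cv_in_vmax_seminorm; [exact HNs | apply cv_coord_vmax, Hu]. Qed.

Lemma vmax_le_norm : exists C, 0 <= C /\ forall x, vmax n x <= C * N x.
Proof.
  (* otherwise vectors ys k with vmax 1 and N (ys k) -> 0 accumulate at some l
     with vmax l = 1 and N l = 0 *)
  apply NNPP; intros Hnot.
  assert (Hbad : forall k : nat, exists x, INR (S k) * N x < vmax n x).
  { intros k. apply NNPP; intros Hk. apply Hnot. exists (INR (S k)).
    split; [apply pos_INR|]. intros x. apply Rnot_lt_le. intros Hx. apply Hk. exists x; exact Hx. }
  destruct (choice _ Hbad) as [xs Hxs].
  assert (Hpos : forall k, 0 < vmax n (xs k)).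
  { intros k. pose proof (seminorm_nonneg _ _ HNs (xs k)). pose proof (pos_INR (S k)).
    specialize (Hxs k). nra. }
  set (ys := fun k => vscal (/ vmax n (xs k)) (xs k)).
  assert (Hys_vmax : forall k, vmax n (ys k) = 1).
  { intros k. specialize (Hpos k). unfold ys.
    rewrite (proj1 (vmax_seminorm n)), Rabs_right;
      [field; lra | left; apply Rinv_0_lt_compat, Hpos]. }
  assert (Hys_N : forall k, N (ys k) < / INR (S k)).
  { intros k. specialize (Hxs k). specialize (Hpos k).
    pose proof (lt_0_INR (S k) ltac:(lia)). unfold ys.
    rewrite (proj1 HNs), Rabs_right by (left; apply Rinv_0_lt_compat, Hpos).
    apply (Rmult_lt_reg_l (INR (S k) * vmax n (xs k))); [nra|].
    replace (INR (S k) * vmax n (xs k) * (/ vmax n (xs k) * N (xs k))) with (INR (S k) * N (xs k))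
      by (field; lra).
    replace (INR (S k) * vmax n (xs k) * / INR (S k)) with (vmax n (xs k)) by (field; lra).
    exact Hxs. }
  destruct (bounded_cv_coord_subseq n ys 1) as [phi [l [Hphi Hl]]].
  { intros k i. rewrite <- (Hys_vmax k). apply vmax_ge_coord. }
  assert (Hl_vmax : 1 <= vmax n l).
  { apply (cv_in_limit_ge _ _ 1 1 _ l (seminorm_lipschitz _ (vmax_seminorm n))
                           (cv_coord_vmax _ _ Hl)).
    intros eps Heps. exists 0%nat. intros k _. rewrite Hys_vmax. lra. }
  assert (Hl_N : N l <= 0).
  { apply (cv_in_limit_le _ _ 1 0 _ l (seminorm_lipschitz _ HNs) (cv_coord_norm _ _ Hl)).
    intros eps Heps. apply (eventually_mono (fun k => / INR (S (phi k)) < eps)).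
    - intros k Hk. pose proof (Hys_N (phi k)). lra.
    - apply (eventually_subseq (fun k => / INR (S k) < eps) phi Hphi), eventually_inv_S_lt, Heps. }
  assert (Hl0 : l = vzero) by (apply HN; pose proof (proj1 HN l); lra).
  rewrite Hl0, (seminorm_zero _ _ (vmax_seminorm n)) in Hl_vmax. lra.
Qed.

Lemma bounded_cv_subseq (u : nat -> vec n) (B : R) :
  (forall k, N (u k) <= B) -> exists phi z, strict_incr phi /\ cv_in N (fun k => u (phi k)) z.
Proof.
  intros HB. destruct vmax_le_norm as [C [HC0 HC]].
  destruct (bounded_cv_coord_subseq n u (C * B)) as [phi [z [Hphi Hz]]].
  { intros k i. eapply Rle_trans; [apply vmax_ge_coord|].
    eapply Rle_trans; [apply HC | apply Rmult_le_compat_l; auto]. }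
  exists phi, z. split; [exact Hphi | apply cv_coord_norm, Hz].
Qed.

Lemma linear_bounded (G : vec n -> vec n) :
  is_linear G -> exists C, 0 <= C /\ forall x, N (G x) <= C * N x.
Proof.
  intros HG. destruct (seminorm_le_vmax n _ (seminorm_comp_linear N G HNs HG)) as [K [HK0 HK]].
  destruct vmax_le_norm as [C [HC0 HC]].
  exists (K * C). split; [nra|]. intros x. eapply Rle_trans; [apply HK|].
  rewrite Rmult_assoc. apply Rmult_le_compat_l; auto.
Qed.

Lemma linear_norm_lipschitz (G : vec n -> vec n) :
  is_linear G -> exists L, lipschitz N (fun x => N (G x)) L.
Proof.
  intros HG. destruct (linear_bounded G HG) as [C [HC0 HC]]. exists C. split; [exact HC0|].
  intros x y. eapply Rle_trans; [|apply HC].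
  apply (seminorm_sub_abs _ _ (seminorm_comp_linear N G HNs HG)).
Qed.

Hypothesis Hn : (1 <= n)%nat.

Lemma exists_unit_vector : exists x : vec n, N x = 1.
Proof.
  set (v := fun _ : Fin.t n => 1).
  assert (Hv : N v <> 0).
  { intros Hv0. apply HN in Hv0.
    pose proof (f_equal (fun w => w (Fin.of_nat_lt Hn)) Hv0) as H. unfold v, vzero in H. lra. }
  exists (vscal (/ N v) v). rewrite (proj1 HNs), Rabs_right; [field; exact Hv|].
  left; apply Rinv_0_lt_compat. pose proof (proj1 HN v). lra.
Qed.

Lemma opnorm_is_lub (G : vec n -> vec n) : is_linear G -> is_lub (opnorm_set N G) (opnorm N G).
Proof.
  intros HG. unfold opnorm. apply epsilon_spec.
  destruct (linear_bounded G HG) as [C [_ HC]].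
  destruct (completeness (opnorm_set N G)) as [m Hm].
  - exists C. intros r [x [Hx ->]]. specialize (HC x). rewrite Hx in HC. lra.
  - destruct exists_unit_vector as [x Hx]. exists (N (G x)), x. auto.
  - exists m; exact Hm.
Qed.

Lemma opnorm_ge_unit (G : vec n -> vec n) (x : vec n) :
  is_linear G -> N x = 1 -> N (G x) <= opnorm N G.
Proof. intros HG Hx. apply (opnorm_is_lub G HG). exists x; auto. Qed.

Lemma opnorm_approx (G : vec n -> vec n) (eps : R) :
  is_linear G -> 0 < eps -> exists x, N x = 1 /\ opnorm N G - eps < N (G x).
Proof.
  intros HG Heps. destruct (opnorm_is_lub G HG) as [_ Hleast].
  apply NNPP; intros Hnot.
  enough (Hub : is_upper_bound (opnorm_set N G) (opnorm N G - eps))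
    by (specialize (Hleast _ Hub); lra).
  intros r [x [Hx ->]]. apply Rnot_lt_le. intros Hlt. apply Hnot. exists x; auto.
Qed.

Section ApproximateMaximisers.
Variables (T A : vec n -> vec n) (xs : nat -> vec n) (lam : nat -> R) (z : vec n) (t : R).
Hypotheses (HT : is_linear T) (HA : is_linear A).
Hypothesis Hxs_unit : forall k, N (xs k) = 1.
Hypothesis HTxs : forall k, N (T (xs k)) <= t.
Hypothesis Hlam_pos : forall k, 0 < lam k.
Hypothesis Hlam_small : forall d, 0 < d -> eventually (fun k => lam k <= d).
Hypothesis Hnear : forall k, t - lam k * lam k < N (vadd (T (xs k)) (vscal (lam k) (A (xs k)))).
Hypothesis Hz : cv_in N xs z.

Lemma limit_unit : N z = 1.
Proof.
  pose proof (seminorm_lipschitz N HNs) as HL.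
  apply Rle_antisym; [apply (cv_in_limit_le N N 1 1 _ z HL Hz)
                     | apply (cv_in_limit_ge N N 1 1 _ z HL Hz)];
    intros eps Heps; exists 0%nat; intros k _; rewrite Hxs_unit; lra.
Qed.

Lemma limit_norm_T_ge : t <= N (T z).
Proof.
  destruct (linear_bounded A HA) as [CA [HCA0 HCA]].
  destruct (linear_norm_lipschitz T HT) as [L HL].
  apply (cv_in_limit_ge N _ L t _ z HL Hz). intros eps Heps.
  apply (eventually_mono (fun k => lam k <= Rmin 1 (eps / (CA + 1)))).
  - intros k Hk. specialize (Hlam_pos k). specialize (Hnear k).
    pose proof (proj2 HNs (T (xs k)) (vscal (lam k) (A (xs k)))) as Htri.
    rewrite (proj1 HNs), Rabs_right in Htri by lra.
    pose proof (HCA (xs k)) as HAx. rewrite Hxs_unit in HAx.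
    pose proof (Rmin_l 1 (eps / (CA + 1))). pose proof (Rmin_r 1 (eps / (CA + 1))).
    assert (Hsmall : lam k * (lam k + CA) <= eps).
    { apply Rle_trans with (eps / (CA + 1) * (CA + 1));
        [apply Rmult_le_compat; lra | right; field; lra]. }
    nra.
  - apply Hlam_small, Rmin_glb_lt; [lra | apply Rdiv_lt_0_compat; lra].
Qed.

Lemma limit_norm_T_plus_ge (mu : R) : 0 < mu -> t <= N (vadd (T z) (vscal mu (A z))).
Proof.
  intros Hmu.
  destruct (linear_norm_lipschitz _ (op_add_scal_linear T A mu HT HA)) as [L HL].
  apply (cv_in_limit_ge N _ L t _ z HL Hz). intros eps Heps.
  apply (eventually_mono (fun k => lam k <= Rmin mu (eps / mu))).
  - intros k Hk. pose proof (Rmin_l mu (eps / mu)). pose proof (Rmin_r mu (eps / mu)).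
    pose proof (seminorm_convex_bound N (T (xs k)) (A (xs k)) t (lam k) mu HNs
                  ltac:(specialize (Hlam_pos k); lra) (HTxs k) (Hnear k)).
    assert (lam k * mu <= eps).
    { apply Rle_trans with (eps / mu * mu); [apply Rmult_le_compat_r; lra | right; field; lra]. }
    unfold op_add, op_scal. lra.
  - apply Hlam_small, Rmin_glb_lt; [lra | apply Rdiv_lt_0_compat; lra].
Qed.

End ApproximateMaximisers.

Lemma orth_plus_attained (T A : vec n -> vec n) :
  is_linear T -> is_linear A ->
  (forall lam, lam >= 0 -> opnorm N (op_add T (op_scal lam A)) >= opnorm N T) ->
  exists x, M_set N T x /\ in_plus N (T x) (A x).
Proof.
  intros HT HA Horth. set (t := opnorm N T).
  assert (Happrox : forall k, exists x, N x = 1 /\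
            t - / INR (S k) * / INR (S k) < N (vadd (T x) (vscal (/ INR (S k)) (A x)))).
  { intros k. set (lam := / INR (S k)).
    assert (Hlam : 0 < lam) by (apply Rinv_0_lt_compat, lt_0_INR; lia).
    destruct (opnorm_approx _ (lam * lam) (op_add_scal_linear T A lam HT HA)) as [x [Hx1 Hx]];
      [nra|].
    exists x. split; [exact Hx1|]. specialize (Horth lam ltac:(lra)).
    unfold t, op_add, op_scal in *. lra. }
  destruct (choice _ Happrox) as [xs Hxs].
  destruct (bounded_cv_subseq xs 1) as [phi [z [Hphi Hz]]];
    [intros k; rewrite (proj1 (Hxs k)); lra|].
  set (lam := fun k => / INR (S (phi k))).
  assert (Hunit : forall k, N (xs (phi k)) = 1) by (intros k; apply Hxs).
  assert (HTxs : forall k, N (T (xs (phi k))) <= t)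
    by (intros k; apply opnorm_ge_unit, Hunit; exact HT).
  assert (Hlam_pos : forall k, 0 < lam k) by (intros k; apply Rinv_0_lt_compat, lt_0_INR; lia).
  assert (Hlam_small : forall d, 0 < d -> eventually (fun k => lam k <= d)).
  { intros d Hd. apply (eventually_mono (fun k => lam k < d)); [intros k; lra|].
    apply (eventually_subseq (fun k => / INR (S k) < d) phi Hphi), eventually_inv_S_lt, Hd. }
  assert (Hnear : forall k, t - lam k * lam k <
            N (vadd (T (xs (phi k))) (vscal (lam k) (A (xs (phi k)))))) by (intros k; apply Hxs).
  pose proof (limit_unit _ z Hunit Hz) as Hz1.
  assert (HTz : N (T z) = t).
  { apply Rle_antisym; [apply opnorm_ge_unit; assumption|].
    exact (limit_norm_T_ge T A _ lam z t HT HA Hunit Hlam_pos Hlam_small Hnear Hz). }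
  exists z. split; [split; assumption|].
  intros mu Hmu. apply Rle_ge. rewrite HTz.
  destruct (Req_dec mu 0) as [->|Hmu0].
  - replace (vadd (T z) (vscal 0 (A z))) with (T z) by vec_ext. lra.
  - apply (limit_norm_T_plus_ge T A _ lam z t HT HA HTxs Hlam_pos Hlam_small Hnear Hz mu). lra.
Qed.

Lemma orth_minus_attained (T A : vec n -> vec n) :
  is_linear T -> is_linear A ->
  (forall lam, lam <= 0 -> opnorm N (op_add T (op_scal lam A)) >= opnorm N T) ->
  exists y, M_set N T y /\ in_minus N (T y) (A y).
Proof.
  intros HT HA Horth.
  destruct (orth_plus_attained T (op_scal (-1) A)) as [y [Hy Hplus]].
  - exact HT.
  - apply op_scal_linear, HA.
  - intros lam Hlam.
    replace (op_add T (op_scal lam (op_scal (-1) A))) with (op_add T (op_scal (- lam) A)).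
    + apply Horth. lra.
    + apply functional_extensionality; intros x. unfold op_add, op_scal. vec_ext.
  - exists y. split; [exact Hy|]. intros lam Hlam.
    replace (vadd (T y) (vscal lam (A y))) with (vadd (T y) (vscal (- lam) (op_scal (-1) A y)))
      by (unfold op_scal; vec_ext).
    apply Hplus. lra.
Qed.

End FiniteDimensionalNorm.

Theorem mainTheorem2 (n : nat) (Hn : (1 <= n)%nat) (N : vec n -> R) (HN : is_norm N)
  (T A : vec n -> vec n) (HT : is_linear T) (HA : is_linear A) :
  BJ_orth_op N T A <->
  exists x y, M_set N T x /\ M_set N T y /\
    in_plus N (T x) (A x) /\ in_minus N (T y) (A y).
Proof.
  split.
  - intros Horth.
    destruct (orth_plus_attained n N HN Hn T A HT HA) as [x [Hx Hplus]];
      [intros lam _; apply Horth|].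
    destruct (orth_minus_attained n N HN Hn T A HT HA) as [y [Hy Hminus]];
      [intros lam _; apply Horth|].
    exists x, y. auto.
  - intros (x & y & [Hx1 HTx] & [Hy1 HTy] & Hplus & Hminus) lam.
    pose proof (op_add_scal_linear T A lam HT HA) as HG.
    destruct (Rle_or_lt 0 lam) as [Hlam|Hlam].
    + pose proof (opnorm_ge_unit n N HN Hn _ x HG Hx1). specialize (Hplus lam (Rle_ge _ _ Hlam)).
      unfold op_add, op_scal in *. lra.
    + pose proof (opnorm_ge_unit n N HN Hn _ y HG Hy1). specialize (Hminus lam (Rlt_le _ _ Hlam)).
      unfold op_add, op_scal in *. lra.
Qed.
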